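(* Let $\phi$ be a positive function on closed curves such that $\phi(c)\ge a\,\mathrm{len}(c)$ for every curve $c$, for some constant $a>0$. Let $C\in C^1(I;\mathbb R^n)$ be a homotopy whose curves $C(\cdot,v)$ are all immersed. Then $$\int_0^1\phi\big(C(\cdot,v)\big)\int_{S^1}|\pi_N\partial_vC|^2|\partial_\theta C|\,d\theta\,dv\;\ge\;a\Big(\int_I|\partial_vC\wedge\partial_\theta C|\,d\theta\,dv\Big)^2 .$$ (The right-hand integral is the area swept out by the homotopy; hence the energy of any homotopy between $c_0,c_1$ is bounded below by $a$ times the square of the infimum of swept areas.)
   Context: $S^1=\mathbb R/2\pi\mathbb Z$, $I=S^1\times[0,1]$; $\mathrm{len}(c)=\int_{S^1}|\dot c|\,d\theta$; $T=\partial_\theta C/|\partial_\theta C|$, $\pi_Nw=w-\langle w,T\rangle T$; for $V,W\in\mathbb R^n$, $|V\wedge W|^2=|V|^2|W|^2-\langle V,W\rangle^2$ (the norm of the vector of all $2\times2$ minors of the matrix with columns $V,W$). *)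

From Stdlib Require Import Reals Lra.
From Coquelicot Require Import Coquelicot.
Open Scope R_scope.

(* Vectors of R^n are represented as functions [nat -> R]; only the
   components [k < n] are used. *)
Fixpoint sumk (n : nat) (f : nat -> R) : R :=
  match n with O => 0 | S m => sumk m f + f m end.

Definition dot (n : nat) (u w : nat -> R) : R := sumk n (fun k => u k * w k).
Definition vnorm (n : nat) (u : nat -> R) : R := sqrt (dot n u u).

Definition wedge_norm (n : nat) (V W : nat -> R) : R :=
  sqrt (vnorm n V ^ 2 * vnorm n W ^ 2 - dot n V W ^ 2).

Definition unit_tangent (n : nat) (t : nat -> R) : nat -> R :=
  fun k => t k / vnorm n t.
Definition normal_proj (n : nat) (t w : nat -> R) : nat -> R :=
  fun k => w k - dot n w (unit_tangent n t) * unit_tangent n t k.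

(* Curves S^1 -> R^n: functions R -> (nat -> R), 2pi-periodic. *)
Definition closed_C1_curve (n : nat) (c : R -> nat -> R) : Prop :=
  forall k, (k < n)%nat ->
    (forall t, c (t + 2 * PI) k = c t k) /\
    (forall t, ex_derive (fun s => c s k) t) /\
    (forall t, continuous (fun s => Derive (fun u => c u k) s) t).

Definition len (n : nat) (c : R -> nat -> R) : R :=
  RInt (fun t => vnorm n (fun k => Derive (fun s => c s k) t)) 0 (2 * PI).

(* joint continuity on the closed strip R x [0,1] (i.e. on I = S^1 x [0,1]) *)
Definition cont_strip (F : R -> R -> R) : Prop :=
  forall th v, 0 <= v <= 1 ->
    filterlim (fun p : R * R => F (fst p) (snd p))
      (within (fun p : R * R => 0 <= snd p <= 1) (locally (th, v)))
      (locally (F th v)).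

(* C in C^1(I;R^n), C(theta,v) = C theta v, with partial derivatives
   Cth = d_theta C and Cv = d_v C (d_v taken on 0<v<1 and extended
   continuously to the closed strip). *)
Definition C1_homotopy (n : nat) (C Cth Cv : R -> R -> nat -> R) : Prop :=
  forall k, (k < n)%nat ->
    (forall th v, C (th + 2 * PI) v k = C th v k) /\
    cont_strip (fun th v => C th v k) /\
    cont_strip (fun th v => Cth th v k) /\
    cont_strip (fun th v => Cv th v k) /\
    (forall th v, 0 <= v <= 1 -> is_derive (fun s => C s v k) th (Cth th v k)) /\
    (forall th v, 0 < v < 1 -> is_derive (fun w => C th w k) v (Cv th v k)).

Definition immersed_homotopy (n : nat) (Cth : R -> R -> nat -> R) : Prop :=
  forall th v, 0 <= v <= 1 -> vnorm n (Cth th v) <> 0.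

(** The area swept out by the homotopy is controlled one curve at a time.
    Pointwise, [|V ∧ T| = |π_N V| |T|], so by Cauchy–Schwarz in [θ] the area
    density [A(v) = ∫ |∂_v C ∧ ∂_θ C| dθ] satisfies
    [A(v)^2 <= (∫ |π_N ∂_v C|^2 |∂_θ C| dθ) * len(C(·,v))], and
    [a len <= φ] turns this into [a A(v)^2 <= φ(C(·,v)) ∫ |π_N ∂_v C|^2 |∂_θ C| dθ].
    Cauchy–Schwarz in [v] on [[0,1]] gives [(∫ A)^2 <= ∫ A^2], and integrating the
    pointwise bound concludes.  Integrability in [v] comes from continuity of
    parametric integrals, after extending the fields from the strip [R × [0,1]]
    to the plane by clamping [v] into [[0,1]]. *)
From Stdlib Require Import Reals Lra Lia.
From Coquelicot Require Import Coquelicot.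
Open Scope R_scope.

Lemma sumk_ext m f g : (forall k, (k < m)%nat -> f k = g k) -> sumk m f = sumk m g.
Proof.
  induction m as [|m IH]; intros H; simpl; [reflexivity|].
  rewrite IH by (intros; apply H; lia). rewrite H by lia. reflexivity.
Qed.

Lemma sumk_plus m f g : sumk m (fun k => f k + g k) = sumk m f + sumk m g.
Proof. induction m as [|m IH]; simpl; [lra|]. rewrite IH; lra. Qed.

Lemma sumk_scal m c f : sumk m (fun k => c * f k) = c * sumk m f.
Proof. induction m as [|m IH]; simpl; [lra|]. rewrite IH; lra. Qed.

Lemma sumk_ge_0 m f : (forall k, 0 <= f k) -> 0 <= sumk m f.
Proof. intros H; induction m as [|m IH]; simpl; [lra|]. specialize (H m); lra. Qed.

Lemma dot_self_ge_0 n u : 0 <= dot n u u.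
Proof. apply sumk_ge_0. intros; nra. Qed.

Lemma vnorm_ge_0 n u : 0 <= vnorm n u.
Proof. apply sqrt_pos. Qed.

Lemma vnorm_pow2 n u : vnorm n u ^ 2 = dot n u u.
Proof. unfold vnorm. rewrite pow2_sqrt; [reflexivity|apply dot_self_ge_0]. Qed.

Lemma vnorm_ext n u w : (forall k, (k < n)%nat -> u k = w k) -> vnorm n u = vnorm n w.
Proof. intros H. unfold vnorm, dot. f_equal. apply sumk_ext. intros k Hk. rewrite H; auto. Qed.

Lemma normal_proj_pow2 n t w : vnorm n t <> 0 ->
  vnorm n (normal_proj n t w) ^ 2 * vnorm n t ^ 2
  = vnorm n w ^ 2 * vnorm n t ^ 2 - dot n w t ^ 2.
Proof.
  intros Ht. set (N := vnorm n t) in *.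
  assert (HN : N ^ 2 = dot n t t) by apply vnorm_pow2.
  assert (Hs : dot n w (unit_tangent n t) = dot n w t / N).
  { unfold dot, unit_tangent, Rdiv. rewrite Rmult_comm, <- sumk_scal.
    apply sumk_ext. intros; fold N; ring. }
  rewrite !vnorm_pow2. fold N. unfold normal_proj. rewrite Hs.
  set (s := dot n w t / N).
  assert (E : dot n (fun k => w k - s * unit_tangent n t k) (fun k => w k - s * unit_tangent n t k)
     = dot n w w + (-2 * s / N) * dot n w t + (s ^ 2 / N ^ 2) * dot n t t).
  { unfold dot. rewrite <- !sumk_scal, <- !sumk_plus. apply sumk_ext. intros.
    unfold unit_tangent; fold N. field. exact Ht. }
  rewrite E, <- HN. unfold s. field. exact Ht.
Qed.

Lemma wedge_norm_normal_proj n V W : vnorm n W <> 0 ->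
  wedge_norm n V W = vnorm n (normal_proj n W V) * vnorm n W.
Proof.
  intros HW. unfold wedge_norm. rewrite <- normal_proj_pow2, <- Rpow_mult_distr by exact HW.
  apply sqrt_pow2. apply Rmult_le_pos; apply vnorm_ge_0.
Qed.

Lemma quadratic_ge_0 p q s t : 0 <= p -> 0 <= s -> q ^ 2 <= p * s ->
  0 <= p - 2 * t * q + t ^ 2 * s.
Proof.
  intros Hp Hs Hq. destruct (Rle_lt_or_eq_dec 0 s Hs) as [Hs'|<-]; [|nra].
  apply Rmult_le_reg_l with s; [exact Hs'|]. pose proof (pow2_ge_0 (t * s - q)). nra.
Qed.

Lemma discriminant_le p q s : 0 <= s -> (forall t, 0 <= p - 2 * t * q + t ^ 2 * s) ->
  q ^ 2 <= p * s.
Proof.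
  intros Hs H. destruct (Rle_lt_or_eq_dec 0 s Hs) as [Hs'|<-].
  - specialize (H (q / s)).
    replace (p - 2 * (q / s) * q + (q / s) ^ 2 * s) with ((p * s - q ^ 2) / s) in H
      by (field; lra).
    apply Rmult_le_compat_r with (r := s) in H; [|lra].
    unfold Rdiv in H. rewrite Rmult_assoc, Rinv_l in H; lra.
  - destruct (Req_dec q 0) as [->|Hq]; [pose proof (H 0); nra|].
    specialize (H ((p + 1) / (2 * q))).
    replace (p - 2 * ((p + 1) / (2 * q)) * q + ((p + 1) / (2 * q)) ^ 2 * 0) with (-1) in H
      by (field; exact Hq).
    lra.
Qed.

Lemma RInt_Cauchy_Schwarz P Q S a b : a <= b ->
  ex_RInt P a b -> ex_RInt Q a b -> ex_RInt S a b ->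
  (forall x, a < x < b -> 0 <= P x /\ 0 <= S x /\ Q x ^ 2 <= P x * S x) ->
  RInt Q a b ^ 2 <= RInt P a b * RInt S a b.
Proof.
  intros Hab HP HQ HS H.
  apply discriminant_le; [apply RInt_ge_0; auto; apply H|].
  intros t.
  assert (EQ : ex_RInt (fun x => - (2 * t) * Q x) a b)
    by exact (ex_RInt_scal (V := R_CompleteNormedModule) _ _ _ _ HQ).
  assert (ES : ex_RInt (fun x => t ^ 2 * S x) a b)
    by exact (ex_RInt_scal (V := R_CompleteNormedModule) _ _ _ _ HS).
  assert (EPQ : ex_RInt (fun x => P x + - (2 * t) * Q x) a b)
    by exact (ex_RInt_plus (V := R_CompleteNormedModule) _ _ _ _ HP EQ).
  replace (RInt P a b - 2 * t * RInt Q a b + t ^ 2 * RInt S a b)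
    with (RInt (fun x => P x + - (2 * t) * Q x + t ^ 2 * S x) a b).
  - apply RInt_ge_0; auto.
    + exact (ex_RInt_plus (V := R_CompleteNormedModule) _ _ _ _ EPQ ES).
    + intros x Hx. destruct (H x Hx) as (HPx & HSx & HQx).
      replace (P x + - (2 * t) * Q x + t ^ 2 * S x) with (P x - 2 * t * Q x + t ^ 2 * S x)
        by ring.
      apply quadratic_ge_0; assumption.
  - rewrite (RInt_plus (V := R_CompleteNormedModule)) by assumption.
    rewrite (RInt_plus (V := R_CompleteNormedModule)) by assumption.
    rewrite !(RInt_scal (V := R_CompleteNormedModule)) by assumption.
    change (RInt P a b + - (2 * t) * RInt Q a b + t ^ 2 * RInt S a b
            = RInt P a b - 2 * t * RInt Q a b + t ^ 2 * RInt S a b). ring.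
Qed.

Lemma RInt_pow2_le f a b : a <= b -> ex_RInt f a b -> ex_RInt (fun x => f x ^ 2) a b ->
  RInt f a b ^ 2 <= (b - a) * RInt (fun x => f x ^ 2) a b.
Proof.
  intros Hab Hf Hf2.
  replace (b - a) with (RInt (fun _ => 1) a b).
  - rewrite Rmult_comm. apply RInt_Cauchy_Schwarz; auto.
    + apply (ex_RInt_const (V := R_NormedModule)).
    + intros x _. repeat split; [apply pow2_ge_0|lra|lra].
  - rewrite (RInt_const (V := R_CompleteNormedModule)).
    change ((b - a) * 1 = b - a). apply Rmult_1_r.
Qed.

Definition continuous_2d (F : R -> R -> R) := forall x y, continuity_2d_pt F x y.

Lemma continuous_2d_ext F G : (forall x y, F x y = G x y) ->
  continuous_2d F -> continuous_2d G.
Proof. intros E H x y. apply (continuity_2d_pt_ext F); auto. Qed.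

Lemma continuous_2d_mult F G : continuous_2d F -> continuous_2d G ->
  continuous_2d (fun x y => F x y * G x y).
Proof. intros HF HG x y. apply continuity_2d_pt_mult; auto. Qed.

Lemma continuous_2d_pow2 F : continuous_2d F -> continuous_2d (fun x y => F x y ^ 2).
Proof.
  intros H. apply (continuous_2d_ext (fun x y => F x y * F x y)); [intros; ring|].
  apply continuous_2d_mult; exact H.
Qed.

Lemma continuous_2d_sumk m (f : nat -> R -> R -> R) :
  (forall k, (k < m)%nat -> continuous_2d (f k)) ->
  continuous_2d (fun x y => sumk m (fun k => f k x y)).
Proof.
  induction m as [|m IH]; intros H x y; simpl; [apply continuity_2d_pt_const|].
  apply continuity_2d_pt_plus; [apply IH; intros; apply H; lia|apply H; lia].
Qed.

Definition continuous_2d_vec n (U : R -> R -> nat -> R) :=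
  forall k, (k < n)%nat -> continuous_2d (fun x y => U x y k).

Lemma continuous_2d_dot n U V : continuous_2d_vec n U -> continuous_2d_vec n V ->
  continuous_2d (fun x y => dot n (U x y) (V x y)).
Proof.
  intros HU HV. apply (continuous_2d_sumk n (fun k x y => U x y k * V x y k)).
  intros k Hk. apply continuous_2d_mult; auto.
Qed.

Lemma continuous_2d_vnorm n U : continuous_2d_vec n U ->
  continuous_2d (fun x y => vnorm n (U x y)).
Proof.
  intros H x y. apply continuity_1d_2d_pt_comp.
  - apply continuity_pt_sqrt, dot_self_ge_0.
  - apply continuous_2d_dot; auto.
Qed.

Lemma continuous_2d_unit_tangent n U : continuous_2d_vec n U ->
  (forall x y, vnorm n (U x y) <> 0) ->
  continuous_2d_vec n (fun x y => unit_tangent n (U x y)).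
Proof.
  intros H N k Hk x y. apply continuity_2d_pt_mult; [apply H; auto|].
  apply continuity_2d_pt_inv; [apply continuous_2d_vnorm; auto|apply N].
Qed.

Lemma continuous_2d_normal_proj n U V : continuous_2d_vec n U -> continuous_2d_vec n V ->
  (forall x y, vnorm n (U x y) <> 0) ->
  continuous_2d_vec n (fun x y => normal_proj n (U x y) (V x y)).
Proof.
  intros HU HV N k Hk x y. apply continuity_2d_pt_minus; [apply HV; auto|].
  pose proof (continuous_2d_unit_tangent n U HU N) as HT.
  apply continuity_2d_pt_mult; [apply continuous_2d_dot|apply HT]; auto.
Qed.

Lemma continuous_of_continuous_2d F v th : continuous_2d F -> continuous (fun t => F t v) th.
Proof.
  intros H. apply filterlim_locally. intros eps.
  destruct (H th v eps) as [d Hd]. exists d. intros t Ht. apply Hd; [exact Ht|].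
  rewrite Rminus_diag, Rabs_R0. apply cond_pos.
Qed.

Lemma ex_RInt_continuous_2d F v a b : continuous_2d F -> ex_RInt (fun t => F t v) a b.
Proof.
  intros H. apply (ex_RInt_continuous (V := R_CompleteNormedModule)).
  intros; apply continuous_of_continuous_2d, H.
Qed.

(* Uniform continuity on [[a,b] × [v0-1,v0+1]] bounds the variation of the integrand
   uniformly in [t]. *)
Lemma continuous_RInt_param F a b v0 : continuous_2d F -> a <= b ->
  continuous (fun v => RInt (fun t => F t v) a b) v0.
Proof.
  intros H Hab. apply filterlim_locally. intros eps.
  assert (He : 0 < eps / (b - a + 1)) by (apply Rdiv_lt_0_compat; [apply cond_pos|lra]).
  destruct (uniform_continuity_2d F a b (v0 - 1) (v0 + 1)
              (fun x y _ _ => H x y) (mkposreal _ He)) as [d Hd].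
  assert (Hd1 : 0 < Rmin d 1) by (apply Rmin_pos; [apply cond_pos|lra]).
  exists (mkposreal _ Hd1). intros v Hv. change (Rabs (v - v0) < Rmin d 1) in Hv.
  pose proof (Rmin_l d 1). pose proof (Rmin_r d 1).
  assert (Hv1 : v0 - 1 <= v <= v0 + 1) by (apply Rabs_def2 in Hv as []; lra).
  change (Rabs (RInt (fun t => F t v) a b - RInt (fun t => F t v0) a b) < eps).
  rewrite <- (RInt_minus (V := R_CompleteNormedModule)) by apply ex_RInt_continuous_2d, H.
  eapply Rle_lt_trans.
  - apply (abs_RInt_le_const _ a b (eps / (b - a + 1))); [exact Hab| |].
    + apply (ex_RInt_minus (V := R_CompleteNormedModule)); apply ex_RInt_continuous_2d, H.
    + intros t Ht. left. apply Hd; try lra.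
      rewrite Rminus_diag, Rabs_R0. apply cond_pos.
  - replace (pos eps) with ((b - a + 1) * (eps / (b - a + 1))) at 2 by (field; lra).
    apply Rmult_lt_compat_r; [exact He|lra].
Qed.

Definition clamp (v : R) : R := Rmax 0 (Rmin 1 v).

Lemma clamp_in v : 0 <= clamp v <= 1.
Proof. unfold clamp, Rmax, Rmin. repeat destruct Rle_dec; lra. Qed.

Lemma clamp_id v : 0 <= v <= 1 -> clamp v = v.
Proof. intros. unfold clamp, Rmax, Rmin. repeat destruct Rle_dec; lra. Qed.

Lemma clamp_lipschitz x y : Rabs (clamp x - clamp y) <= Rabs (x - y).
Proof. unfold clamp, Rmax, Rmin, Rabs. repeat destruct Rle_dec; repeat destruct Rcase_abs; lra. Qed.

Lemma continuous_2d_clamp F : cont_strip F -> continuous_2d (fun th v => F th (clamp v)).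
Proof.
  intros H x y. apply continuity_2d_pt_filterlim.
  eapply (filterlim_comp _ _ _ (fun z : R * R => (fst z, clamp (snd z)))
            (fun p : R * R => F (fst p) (snd p))); [|exact (H x (clamp y) (clamp_in y))].
  intros P [eps HP]. exists eps. intros [z1 z2] [B1 B2]. apply HP; [split|apply clamp_in].
  - exact B1.
  - change (Rabs (clamp z2 - clamp y) < eps).
    change (Rabs (z2 - y) < eps) in B2. pose proof (clamp_lipschitz z2 y); lra.
Qed.

Lemma two_PI_ge_0 : 0 <= 2 * PI.
Proof. pose proof PI_RGT_0; lra. Qed.

Definition swept_area_density n (Cth Cv : R -> R -> nat -> R) (v : R) : R :=
  RInt (fun th => wedge_norm n (Cv th v) (Cth th v)) 0 (2 * PI).

Definition normal_energy_density n (Cth Cv : R -> R -> nat -> R) (v : R) : R :=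
  RInt (fun th => vnorm n (normal_proj n (Cth th v) (Cv th v)) ^ 2 * vnorm n (Cth th v))
    0 (2 * PI).

Section Homotopy.

Variables (n : nat) (C Cth Cv : R -> R -> nat -> R).
Hypothesis HC : C1_homotopy n C Cth Cv.
Hypothesis Himm : immersed_homotopy n Cth.

Lemma continuous_2d_vec_Cth : continuous_2d_vec n (fun th v => Cth th (clamp v)).
Proof. intros k Hk. apply (continuous_2d_clamp (fun th v => Cth th v k)), HC, Hk. Qed.

Lemma continuous_2d_vec_Cv : continuous_2d_vec n (fun th v => Cv th (clamp v)).
Proof. intros k Hk. apply (continuous_2d_clamp (fun th v => Cv th v k)), HC, Hk. Qed.

Lemma vnorm_Cth_clamp_neq_0 th v : vnorm n (Cth th (clamp v)) <> 0.
Proof. apply Himm, clamp_in. Qed.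

Lemma continuous_2d_speed : continuous_2d (fun th v => vnorm n (Cth th (clamp v))).
Proof. apply continuous_2d_vnorm, continuous_2d_vec_Cth. Qed.

Lemma continuous_2d_normal_proj_norm :
  continuous_2d (fun th v => vnorm n (normal_proj n (Cth th (clamp v)) (Cv th (clamp v)))).
Proof.
  apply continuous_2d_vnorm, continuous_2d_normal_proj;
    [apply continuous_2d_vec_Cth|apply continuous_2d_vec_Cv|apply vnorm_Cth_clamp_neq_0].
Qed.

Lemma continuous_2d_energy_integrand : continuous_2d (fun th v =>
  vnorm n (normal_proj n (Cth th (clamp v)) (Cv th (clamp v))) ^ 2 * vnorm n (Cth th (clamp v))).
Proof.
  apply continuous_2d_mult; [|apply continuous_2d_speed].
  apply continuous_2d_pow2, continuous_2d_normal_proj_norm.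
Qed.

Lemma continuous_2d_wedge_norm :
  continuous_2d (fun th v => wedge_norm n (Cv th (clamp v)) (Cth th (clamp v))).
Proof.
  eapply continuous_2d_ext.
  - intros th v. symmetry. apply wedge_norm_normal_proj, vnorm_Cth_clamp_neq_0.
  - apply continuous_2d_mult; [apply continuous_2d_normal_proj_norm|apply continuous_2d_speed].
Qed.

Lemma continuous_swept_area_density_clamp v :
  continuous (fun v => swept_area_density n Cth Cv (clamp v)) v.
Proof. apply continuous_RInt_param; [apply continuous_2d_wedge_norm|apply two_PI_ge_0]. Qed.

Lemma ex_RInt_swept_area_density_pow k :
  ex_RInt (fun v => swept_area_density n Cth Cv v ^ k) 0 1.
Proof.
  apply (ex_RInt_ext (fun v => swept_area_density n Cth Cv (clamp v) ^ k)).
  - intros v Hv. rewrite Rmin_left, Rmax_right in Hv by lra. rewrite clamp_id by lra.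
    reflexivity.
  - apply (ex_RInt_continuous (V := R_CompleteNormedModule)). intros v _.
    apply (continuous_comp _ (fun x => x ^ k)); [apply continuous_swept_area_density_clamp|].
    apply continuity_pt_filterlim, derivable_continuous_pt, derivable_pt_pow.
Qed.

Lemma closed_C1_curve_slice v : 0 <= v <= 1 -> closed_C1_curve n (fun th => C th v).
Proof.
  intros Hv k Hk. destruct (HC k Hk) as (Hper & _ & _ & _ & Hd & _).
  split; [|split]; intros t.
  - apply Hper.
  - exists (Cth t v k). apply Hd, Hv.
  - apply (continuous_ext (fun s => Cth s (clamp v) k)).
    + intros s. rewrite clamp_id by exact Hv. symmetry. apply is_derive_unique, Hd, Hv.
    + apply (continuous_of_continuous_2d (fun th v => Cth th (clamp v) k)).
      apply continuous_2d_vec_Cth, Hk.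
Qed.

Lemma len_slice v : 0 <= v <= 1 ->
  len n (fun th => C th v) = RInt (fun th => vnorm n (Cth th v)) 0 (2 * PI).
Proof.
  intros Hv. apply RInt_ext. intros th _. apply vnorm_ext. intros k Hk.
  apply is_derive_unique, HC; assumption.
Qed.

Lemma swept_area_density_pow2_le v : 0 <= v <= 1 ->
  swept_area_density n Cth Cv v ^ 2
  <= normal_energy_density n Cth Cv v * len n (fun th => C th v).
Proof.
  intros Hv. rewrite len_slice by exact Hv.
  pose proof (clamp_id v Hv) as Ev.
  pose proof (ex_RInt_continuous_2d _ v 0 (2 * PI) continuous_2d_wedge_norm) as EW.
  pose proof (ex_RInt_continuous_2d _ v 0 (2 * PI) continuous_2d_energy_integrand) as EE.
  pose proof (ex_RInt_continuous_2d _ v 0 (2 * PI) continuous_2d_speed) as EL.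
  simpl in EW, EE, EL. rewrite Ev in EW, EE, EL.
  apply RInt_Cauchy_Schwarz; try assumption; [apply two_PI_ge_0|].
  intros th _. repeat split.
  - apply Rmult_le_pos; [apply pow2_ge_0|apply vnorm_ge_0].
  - apply vnorm_ge_0.
  - rewrite wedge_norm_normal_proj by (apply Himm, Hv). right; ring.
Qed.

Lemma normal_energy_density_ge_0 v : 0 <= v <= 1 -> 0 <= normal_energy_density n Cth Cv v.
Proof.
  intros Hv. apply RInt_ge_0; [apply two_PI_ge_0| |].
  - pose proof (ex_RInt_continuous_2d _ v 0 (2 * PI) continuous_2d_energy_integrand) as EE.
    simpl in EE. rewrite clamp_id in EE by exact Hv. exact EE.
  - intros. apply Rmult_le_pos; [apply pow2_ge_0|apply vnorm_ge_0].
Qed.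

End Homotopy.

Theorem mainTheorem11 (n : nat) (phi : (R -> nat -> R) -> R) (a : R)
  (C Cth Cv : R -> R -> nat -> R) :
  0 < a ->
  (forall c, closed_C1_curve n c -> 0 < phi c) ->
  (forall c, closed_C1_curve n c -> a * len n c <= phi c) ->
  C1_homotopy n C Cth Cv ->
  immersed_homotopy n Cth ->
  ex_RInt (fun v => phi (fun th => C th v) *
             RInt (fun th => vnorm n (normal_proj n (Cth th v) (Cv th v)) ^ 2
                             * vnorm n (Cth th v)) 0 (2 * PI)) 0 1 ->
  a * (RInt (fun v => RInt (fun th => wedge_norm n (Cv th v) (Cth th v)) 0 (2 * PI)) 0 1) ^ 2
  <= RInt (fun v => phi (fun th => C th v) *
             RInt (fun th => vnorm n (normal_proj n (Cth th v) (Cv th v)) ^ 2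
                             * vnorm n (Cth th v)) 0 (2 * PI)) 0 1.
Proof.
  intros Ha _ Hphi HC Himm Hex.
  change (a * RInt (swept_area_density n Cth Cv) 0 1 ^ 2 <=
    RInt (fun v => phi (fun th => C th v) * normal_energy_density n Cth Cv v) 0 1).
  pose proof (ex_RInt_swept_area_density_pow _ _ _ _ HC Himm) as EA.
  apply Rle_trans with (a * RInt (fun v => swept_area_density n Cth Cv v ^ 2) 0 1).
  - apply Rmult_le_compat_l; [lra|].
    assert (EA1 : ex_RInt (swept_area_density n Cth Cv) 0 1).
    { apply (ex_RInt_ext (fun v => swept_area_density n Cth Cv v ^ 1)); [|apply EA].
      intros; apply pow_1. }
    pose proof (RInt_pow2_le _ 0 1 Rle_0_1 EA1 (EA 2%nat)) as HCS.
    rewrite Rminus_0_r, Rmult_1_l in HCS. exact HCS.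
  - rewrite <- (RInt_scal (V := R_CompleteNormedModule)) by apply EA.
    apply RInt_le; [lra|apply (ex_RInt_scal (V := R_CompleteNormedModule)), EA|exact Hex|].
    intros v Hv. assert (Hv' : 0 <= v <= 1) by lra.
    change (a * swept_area_density n Cth Cv v ^ 2
            <= phi (fun th => C th v) * normal_energy_density n Cth Cv v).
    pose proof (swept_area_density_pow2_le _ _ _ _ HC Himm v Hv') as HA.
    pose proof (Rmult_le_compat_l _ _ _ (normal_energy_density_ge_0 _ _ _ _ HC Himm v Hv')
                  (Hphi _ (closed_C1_curve_slice _ _ _ _ HC v Hv'))) as Hlen.
    nra.
Qed.
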